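(* Let $\Sigma=\{x_1,\dots,x_d\}$ be a finite alphabet, $\mathbf w$ a right-infinite word over $\Sigma$, and $A_{\mathbf w}$ its factor algebra over $\mathbb Q$. Let $x=x_1+\cdots+x_d\in A_{\mathbf w}$, let $n\ge 1$, and let $V_n$ be the $\mathbb Q$-span of the factors of $\mathbf w$ of length $n$. Define the linear map $\Phi_n:V_n\to A_{\mathbf w}$ by $\Phi_n(u)=ux-xu$. Then the kernel of $\Phi_n$ is one-dimensional, spanned by $x^n=\sum_{u\in\mathrm{Fac}(\mathbf w),\,|u|=n}u$. Consequently, if $W_{n+1}$ denotes the $\mathbb Q$-span of all $ab-ba$ with $a,b\in\mathrm{Fac}(\mathbf w)$, $|a|+|b|=n+1$, then $\dim W_{n+1}\ge \dim V_n-1$.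
   Context: $\mathrm{Fac}(\mathbf w)$ is the set of finite factors (contiguous blocks, including the empty word) of $\mathbf w$. The factor algebra $A_{\mathbf w}$ over $\mathbb Q$ is the $\mathbb Q$-vector space with basis $\mathrm{Fac}(\mathbf w)$, with multiplication defined on basis elements by $u\cdot v=uv$ (concatenation) if $uv\in\mathrm{Fac}(\mathbf w)$ and $u\cdot v=0$ otherwise, extended bilinearly. In this algebra $x^n$ equals the sum of all factors of $\mathbf w$ of length $n$. *)

(* The factor algebra A_w over Q is modelled by functions
   seq Sigma -> rat (coefficient of each word); genuine elements of A_w are the
   finitely supported ones supported on Fac(w). *)
From mathcomp Require Import all_boot all_algebra.
From Stdlib Require Import ClassicalEpsilon.
Set Implicit Arguments. Unset Strict Implicit. Unset Printing Implicit Defensive.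
Import GRing.Theory.
Local Open Scope ring_scope.

Section FactorAlgebra.
Variables (Sigma : finType) (w : nat -> Sigma).

Definition factor (s : seq Sigma) : Prop :=
  exists i : nat, s = [seq w (i + k)%N | k <- iota 0 (size s)].

Definition alg := seq Sigma -> rat.

Definition bas (u : seq Sigma) : alg := fun s =>
  if excluded_middle_informative (factor u) then (if s == u then 1 else 0) else 0.

(* bilinear extension of u.v = uv if uv in Fac(w), 0 otherwise *)
Definition amul (f g : alg) : alg := fun s =>
  if excluded_middle_informative (factor s)
  then \sum_(i < (size s).+1) f (take i s) * g (drop i s) else 0.

Definition aone : alg := bas [::].

Definition apow (f : alg) (k : nat) : alg := iter k (amul f) aone.

Definition xsum : alg := fun s => \sum_(a : Sigma) bas [:: a] s.

Definition facsum (n : nat) : alg := fun s =>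
  if excluded_middle_informative (factor s /\ size s = n) then 1 else 0.

Definition inV (n : nat) (f : alg) : Prop :=
  forall s, f s != 0 -> factor s /\ size s = n.

Definition Phi (u : alg) : alg := fun s => amul u xsum s - amul xsum u s.

Definition inW (m : nat) (f : alg) : Prop :=
  exists ps : seq (rat * seq Sigma * seq Sigma),
    (forall t, t \in ps -> [/\ factor t.1.2, factor t.2 & size t.1.2 + size t.2 = m]%N) /\
    forall s, f s = \sum_(t <- ps)
        t.1.1 * (amul (bas t.1.2) (bas t.2) s - amul (bas t.2) (bas t.1.2) s).

End FactorAlgebra.

From mathcomp Require Import all_boot all_algebra.
From Stdlib Require Import ClassicalEpsilon FunctionalExtensionality.
Import GRing.Theory.
Local Open Scope ring_scope.
Set Implicit Arguments. Unset Strict Implicit. Unset Printing Implicit Defensive.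

(* Elements of A_w are coefficient functions on words, and the
   letter sum x is the indicator of the factors of length 1.  A product of
   homogeneous elements of degrees p and q is read off on each factor of
   length p + q by cutting it after p letters (amul_graded); by induction this
   gives x^n = sum of the factors of length n (apowE).  For u in V_n the same
   computation gives (ux - xu)(s) = u(prefix_n s) - u(suffix_n s) on every
   factor s of length n + 1 (Phi_inV).  Applied to the windows of w starting
   at i, this says that a kernel element has the same coefficient on all
   factors of length n, i.e. is a multiple of x^n (Phi_kernel).
   For the dimension bound, Phi_n(u) is a sum of commutators [u, a] over the
   letters a, so lies in W_(n+1) (inW_Phi); and the images of all factors of
   length n but the last one are independent, since a linear relation yields
   a kernel element that is a multiple of x^n vanishing on the omitted factor
   (Phi_basis_indep). *)

Variant emi_spec (P : Prop) (T : Type) (a b : T) : T -> Type :=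
  | EmiTrue of P : emi_spec P a b a
  | EmiFalse of ~ P : emi_spec P a b b.

Lemma emiP (P : Prop) (T : Type) (a b : T) :
  emi_spec P a b (if excluded_middle_informative P then a else b).
Proof. by case: excluded_middle_informative; constructor. Qed.

Section FactorAlgebraFacts.
Variables (Sigma : finType) (w : nat -> Sigma).

Definition window (i m : nat) : seq Sigma := [seq w (i + k)%N | k <- iota 0 m].

Lemma size_window i m : size (window i m) = m.
Proof. by rewrite size_map size_iota. Qed.

Lemma factor_window i m : factor w (window i m).
Proof. by exists i; rewrite size_window. Qed.

Lemma take_window i m j : take j (window i m) = window i (minn j m).
Proof. by rewrite /window -map_take take_iota. Qed.

Lemma drop_window i m j : drop j (window i m) = window (i + j) (m - j).
Proof.
rewrite /window -map_drop drop_iota add0n -[j]addn0 iotaDl -map_comp addn0.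
by apply: eq_map => k /=; rewrite addnA.
Qed.

Lemma factor_take s j : factor w s -> factor w (take j s).
Proof.
by case=> i Es; exists i; rewrite size_take_min {1}Es take_window.
Qed.

Lemma factor_drop s j : factor w s -> factor w (drop j s).
Proof.
by case=> i Es; exists (i + j)%N; rewrite size_drop {1}Es drop_window.
Qed.

Lemma facsum1 m t : factor w t -> size t = m -> facsum w m t = 1.
Proof. by move=> Ft St; rewrite /facsum; case: emiP => // -[]. Qed.

Lemma facsum0 m t : ~ (factor w t /\ size t = m) -> facsum w m t = 0.
Proof. by move=> Nt; rewrite /facsum; case: emiP. Qed.

Lemma facsum_supp m t : facsum w m t != 0 -> size t = m.
Proof. by rewrite /facsum; case: emiP => [[] | _] //; rewrite eqxx. Qed.

Lemma facsum_split p q s : factor w s -> size s = (p + q)%N ->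
  facsum w p (take p s) = 1 /\ facsum w q (drop p s) = 1.
Proof.
move=> Fs Ss; split.
- by apply: facsum1; [exact: factor_take | rewrite size_takel // Ss leq_addr].
- by apply: facsum1; [exact: factor_drop | rewrite size_drop Ss addKn].
Qed.

Lemma xsumE : xsum w = facsum w 1.
Proof.
apply: functional_extensionality => s; rewrite /xsum /facsum.
case: emiP => [[Fs Ss] | Ns].
- have [b Eb] : exists b, s = [:: b] by case: s Ss {Fs} => [|b []] //; exists b.
  rewrite Eb (bigD1 b) //= big1 ?addr0.
    by rewrite /bas eqxx; case: emiP => // -[]; rewrite -Eb.
  move=> a /negbTE Nab; rewrite /bas; case: emiP => // _.
  by rewrite eqseq_cons eq_sym Nab.
- apply: big1 => a _; rewrite /bas; case: emiP => // Fa.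
  by case: eqP => // Esa; case: Ns; rewrite Esa.
Qed.

Lemma amul_graded (f g : alg Sigma) p q s :
  (forall t, f t != 0 -> size t = p) -> (forall t, g t != 0 -> size t = q) ->
  amul w f g s = facsum w (p + q) s * (f (take p s) * g (drop p s)).
Proof.
move=> Hf Hg; rewrite /amul /facsum.
have split_at (i : 'I_(size s).+1) : f (take i s) * g (drop i s) != 0 ->
    i = p :> nat /\ size s = (p + q)%N.
  have Hi : (i <= size s)%N by rewrite -ltnS.
  rewrite mulf_eq0 negb_or => /andP [/Hf Ei /Hg Eq].
  rewrite size_takel // in Ei; rewrite size_drop in Eq.
  by split=> //; rewrite -Ei -Eq subnKC.
case: emiP => [Fs | NFs]; last by case: emiP => [[]|] // _; rewrite mul0r.
case: emiP => [[_ Ss] | NSs]; rewrite ?mul0r ?mul1r.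
- have Hp : (p < (size s).+1)%N by rewrite Ss ltnS leq_addr.
  rewrite (bigD1 (Ordinal Hp)) //= big1 ?addr0 // => i Hip.
  apply/eqP; apply: contraNT Hip => /split_at [Ei _].
  by apply/eqP; apply: val_inj.
- apply: big1 => i _; apply/eqP; apply: contraT => /split_at [_ Ss].
  by case: NSs.
Qed.

Lemma apowE k : apow w (xsum w) k = facsum w k.
Proof.
elim: k => [|k IH]; apply: functional_extensionality => s.
- rewrite /apow /= /aone /bas /facsum.
  case: emiP => [_ | []]; last by exists 0%N.
  case: emiP => [[_ /size0nil ->] | Ns]; first by rewrite eqxx.
  by case: eqP => // Es; case: Ns; rewrite Es; split; first exists 0%N.
- rewrite /apow iterS -/(apow w (xsum w) k) IH xsumE.
  rewrite (amul_graded _ (@facsum_supp 1) (@facsum_supp k)) add1n.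
  case: (excluded_middle_informative (factor w s /\ size s = k.+1)) => [[Fs Ss] | Ns].
  + by case: (@facsum_split 1 k s Fs Ss) => -> ->; rewrite !mulr1.
  + by rewrite (facsum0 Ns) mul0r.
Qed.

Lemma amul_linl (I : Type) (r : seq I) (c : I -> rat) (f : I -> alg Sigma)
    (g : alg Sigma) s :
  amul w (fun t => \sum_(j <- r) c j * f j t) g s
  = \sum_(j <- r) c j * amul w (f j) g s.
Proof.
rewrite /amul; case: (excluded_middle_informative (factor w s)) => Fs /=; last by rewrite big1 // => j _; rewrite mulr0.
under eq_bigr do rewrite mulr_suml.
rewrite exchange_big /=; apply: eq_bigr => j _; rewrite mulr_sumr.
by apply: eq_bigr => i _; rewrite mulrA.
Qed.

Lemma amul_linr (I : Type) (r : seq I) (c : I -> rat) (f : alg Sigma)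
    (g : I -> alg Sigma) s :
  amul w f (fun t => \sum_(j <- r) c j * g j t) s
  = \sum_(j <- r) c j * amul w f (g j) s.
Proof.
rewrite /amul; case: (excluded_middle_informative (factor w s)) => Fs /=; last by rewrite big1 // => j _; rewrite mulr0.
under eq_bigr do rewrite mulr_sumr.
rewrite exchange_big /=; apply: eq_bigr => j _; rewrite mulr_sumr.
by apply: eq_bigr => i _; rewrite mulrCA.
Qed.

(* x as a linear combination of the letters, for use with amul_linl/linr. *)
Lemma xsum_lin : xsum w = (fun t => \sum_(a <- index_enum Sigma) 1 * bas w [:: a] t).
Proof.
by apply: functional_extensionality => t; apply: eq_bigr => a _; rewrite mul1r.
Qed.

Lemma Phi_lin (I : Type) (r : seq I) (c : I -> rat) (f : I -> alg Sigma) s :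
  Phi w (fun t => \sum_(j <- r) c j * f j t) s = \sum_(j <- r) c j * Phi w (f j) s.
Proof.
rewrite /Phi amul_linl xsum_lin amul_linr.
under [in RHS]eq_bigr do rewrite mulrBr.
by rewrite sumrB; congr (_ - _); apply: eq_bigr => j _; rewrite amul_linr.
Qed.

Lemma Phi_inV n u : inV w n u ->
  forall s, Phi w u s = facsum w n.+1 s * (u (take n s) - u (drop 1 s)).
Proof.
move=> Hu s; have Su t : u t != 0 -> size t = n by case/Hu.
rewrite /Phi xsumE (amul_graded _ Su (@facsum_supp 1)).
rewrite (amul_graded _ (@facsum_supp 1) Su) addn1 add1n.
case: (excluded_middle_informative (factor w s /\ size s = n.+1)) => [[Fs Ss] | Ns].
- have Ss' : size s = (n + 1)%N by rewrite addn1.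
  have [_ ->] := @facsum_split n 1 s Fs Ss'.
  have [-> _] := @facsum_split 1 n s Fs Ss.
  by rewrite mulr1 mul1r mulrBr.
- by rewrite facsum0 // !mul0r subrr.
Qed.

(* The kernel of Phi_n on V_n is the line spanned by x^n: an element of the
   kernel has equal coefficients on any two consecutive windows of w. *)
Lemma Phi_kernel n u : inV w n u ->
  (forall s, Phi w u s = 0) <-> exists c : rat, forall s, u s = c * facsum w n s.
Proof.
move=> Hu; split.
- move=> Hker.
  have shift i : u (window i n) = u (window i.+1 n).
    have := Hker (window i n.+1).
    rewrite (Phi_inV Hu) (facsum1 (factor_window i n.+1) (size_window i n.+1)).
    rewrite mul1r take_window drop_window (minn_idPl (leqnSn n)) addn1 subn1.
    by move/eqP; rewrite subr_eq0 => /eqP.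
  have shift0 i : u (window i n) = u (window 0 n).
    by elim: i => // i IH; rewrite -shift.
  exists (u (window 0 n)) => s.
  case: (excluded_middle_informative (factor w s /\ size s = n)) => [[[i Es] Ss] | Ns].
  + by rewrite facsum1 ?mulr1 //; [rewrite Es Ss shift0 | exists i].
  + by rewrite facsum0 // mulr0; apply/eqP; apply: contraT => /Hu /Ns.
- case=> c Hc s; rewrite (Phi_inV Hu) !Hc.
  case: (excluded_middle_informative (factor w s /\ size s = n.+1)) => [[Fs Ss] | Ns].
  + have Ss' : size s = (n + 1)%N by rewrite addn1.
    have [Ht _] := @facsum_split n 1 s Fs Ss'.
    have [_ Hd] := @facsum_split 1 n s Fs Ss.
    by rewrite Ht Hd subrr mulr0.
  + by rewrite facsum0 // mul0r.
Qed.

Lemma basE v t : factor w v -> bas w v t = if t == v then 1 else 0.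
Proof. by move=> Fv; rewrite /bas; case: emiP. Qed.

Lemma bas_nonfactor v : ~ factor w v -> bas w v = fun _ => 0.
Proof. by move=> Nv; apply: functional_extensionality => t; rewrite /bas; case: emiP. Qed.

Lemma amul0l (g : alg Sigma) s : amul w (fun _ => 0) g s = 0.
Proof. by rewrite /amul; case: emiP => // _; apply: big1 => i _; rewrite mul0r. Qed.

Lemma amul0r (f : alg Sigma) s : amul w f (fun _ => 0) s = 0.
Proof. by rewrite /amul; case: emiP => // _; apply: big1 => i _; rewrite mulr0. Qed.

(* For a factor u of length n, Phi_n(u) = ux - xu = sum of the commutators
   [u, a] over the letters a occurring in w, hence lies in W_(n+1). *)
Lemma inW_Phi n u : factor w u -> size u = n -> inW w n.+1 (Phi w (bas w u)).
Proof.
move=> Fu Su.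
pose occurs (a : Sigma) := if excluded_middle_informative (factor w [:: a]) then true else false.
exists [seq (1, u, [:: a]) | a <- index_enum Sigma & occurs a]; split.
- move=> t /mapP [a]; rewrite mem_filter => /andP [Oa _] -> /=.
  split=> //; last by rewrite Su addn1.
  by move: Oa; rewrite /occurs; case: emiP.
- move=> s; rewrite /Phi xsum_lin amul_linr amul_linl -sumrB.
  rewrite big_map big_filter [RHS]big_mkcond; apply: eq_bigr => a _.
  rewrite /occurs; case: emiP => [_ | Na]; first by rewrite !mul1r.
  by rewrite (bas_nonfactor Na) amul0l amul0r subrr.
Qed.

Lemma inV_comb n m (c : 'I_m -> rat) (b : 'I_m -> seq Sigma) :
  (forall k, factor w (b k) /\ size (b k) = n) ->
  inV w n (fun t => \sum_(k < m) c k * bas w (b k) t).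
Proof.
move=> Hb t Ht.
case: (excluded_middle_informative (factor w t /\ size t = n)) => // Nt.
case/eqP: Ht; apply: big1 => k _; rewrite basE; last by case: (Hb k).
by case: eqP => [Etk | _]; [case: Nt; rewrite Etk | rewrite mulr0].
Qed.

Lemma sum_bas_nth (L : seq (seq Sigma)) m (c : 'I_m -> rat) i :
  uniq L -> (forall s, s \in L -> factor w s) -> (m <= size L)%N -> (i < size L)%N ->
  \sum_(k < m) c k * bas w (nth [::] L k) (nth [::] L i) = \sum_(k < m | val k == i) c k.
Proof.
move=> UL FL Hm Hi; rewrite [RHS]big_mkcond; apply: eq_bigr => k _.
have Hk : (k < size L)%N := leq_trans (ltn_ord k) Hm.
rewrite basE; last by apply/FL/mem_nth.
have -> : (nth [::] L i == nth [::] L k) = (i == k) := nth_uniq [::] Hi Hk UL.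
rewrite eq_sym.
by case: (val k == i); rewrite ?mulr1 ?mulr0.
Qed.

(* Phi_n maps all but one of the factors of length n to linearly
   independent elements: a relation among them is a kernel element of V_n,
   hence a multiple of x^n, and it vanishes on the omitted factor. *)
Lemma Phi_basis_indep n (L : seq (seq Sigma)) : uniq L ->
  (forall s, s \in L <-> factor w s /\ size s = n) ->
  forall c : 'I_(size L).-1 -> rat,
    (forall s, \sum_j c j * Phi w (bas w (nth [::] L j)) s = 0) -> forall j, c j = 0.
Proof.
move=> UL HL c Hc j.
have Hm : ((size L).-1 <= size L)%N := leq_pred _.
have FL s : s \in L -> factor w s by case/HL.
have Hlast : ((size L).-1 < size L)%N.
  by rewrite ltn_predL (leq_ltn_trans (leq0n j) (leq_trans (ltn_ord j) Hm)).
pose v t := \sum_(k < (size L).-1) c k * bas w (nth [::] L k) t.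
have Hv : inV w n v.
  by apply: inV_comb => k; apply/HL/mem_nth; exact: leq_trans (ltn_ord k) Hm.
have [c0 Hc0] : exists c0 : rat, forall s, v s = c0 * facsum w n s.
  by apply/(Phi_kernel Hv) => s; rewrite /v Phi_lin.
have c0_eq0 : c0 = 0.
  have /HL [Fl Sl] := mem_nth [::] Hlast.
  have vlast : v (nth [::] L (size L).-1) = 0.
    by rewrite /v sum_bas_nth //; apply: big_pred0 => k /=; rewrite ltn_eqF.
  by have := Hc0 (nth [::] L (size L).-1); rewrite vlast (facsum1 Fl Sl) mulr1.
have := Hc0 (nth [::] L j); rewrite /v sum_bas_nth ?(leq_trans (ltn_ord j)) //.
by rewrite (big_pred1 j) // c0_eq0 mul0r.
Qed.

End FactorAlgebraFacts.

Theorem mainTheorem7 (Sigma : finType) (w : nat -> Sigma) (n : nat) :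
  (1 <= n)%N ->
  (* x^n (power in A_w) is the sum of the factors of length n, and is nonzero *)
  (forall s, apow w (xsum w) n s = facsum w n s) /\
  (exists s, facsum w n s != 0) /\
  (* ker Phi_n = span (x^n) *)
  (forall u : alg Sigma, inV w n u ->
     ((forall s, Phi w u s = 0) <-> exists c : rat, forall s, u s = c * facsum w n s)) /\
  (* dim W_(n+1) >= dim V_n - 1, where dim V_n = number of factors of length n *)
  (forall L : seq (seq Sigma), uniq L ->
     (forall s, s \in L <-> factor w s /\ size s = n) ->
     exists F : 'I_(size L).-1 -> alg Sigma,
       (forall j, inW w n.+1 (F j)) /\
       (forall c : 'I_(size L).-1 -> rat,
          (forall s, \sum_j c j * F j s = 0) -> forall j, c j = 0)).
Proof.
move=> _; split; first by move=> s; rewrite apowE.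
split.
  exists (window w 0 n).
  by rewrite (facsum1 (factor_window w 0 n) (size_window w 0 n)) oner_eq0.
split; first by move=> u Hu; exact: Phi_kernel.
move=> L UL HL; exists (fun j => Phi w (bas w (nth [::] L j))); split.
- move=> j; have /HL [Fj Sj] := mem_nth [::] (leq_trans (ltn_ord j) (leq_pred _)).
  exact: inW_Phi.
- exact: Phi_basis_indep.
Qed.
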